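(* Let $\mathcal A=(S,R_0)$ be an argumentation network with joint attacks, where $S\neq\varnothing$ and $R_0\subseteq(2^S\setminus\{\varnothing\})\times S$. Then there exists a legitimate Caminada–Gabbay labelling $\lambda$ of $\mathcal A$ (i.e. $\mathcal A$ has complete extensions).
   Context: A legitimate Caminada–Gabbay labelling of $(S,R_0)$ is $\lambda:S\to\{\mathrm{in},\mathrm{out},\mathrm{und}\}$ such that for each $x\in S$: (CG1) $\lambda(x)=\mathrm{in}$ iff either $x$ is attacked by no $G$, or for every $G$ with $GR_0x$ there is $y\in G$ with $\lambda(y)=\mathrm{out}$; (CG2) $\lambda(x)=\mathrm{out}$ iff for some $G$ with $GR_0x$, all $y\in G$ have $\lambda(y)=\mathrm{in}$; (CG3) $\lambda(x)=\mathrm{und}$ iff for every $G$ with $GR_0x$ there is $y\in G$ with $\lambda(y)\neq\mathrm{in}$, and for some $G'$ with $G'R_0x$ every $y\in G'$ has $\lambda(y)\in\{\mathrm{in},\mathrm{und}\}$. Complete extensions are identified with legitimate Caminada–Gabbay labellings. *)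

Inductive label : Type := lin | lout | lund.

(* An argumentation network with joint attacks on a carrier type S:
   R0 G x means the (nonempty) set G of arguments jointly attacks x.
   Sets of arguments are predicates S -> Prop. *)
Definition joint_attack_network (S : Type) (R0 : (S -> Prop) -> S -> Prop) : Prop :=
  (exists x : S, True) /\
  (forall G x, R0 G x -> exists y, G y).

Definition legitimate_CG_labelling (S : Type) (R0 : (S -> Prop) -> S -> Prop)
  (lam : S -> label) : Prop :=
  forall x : S,
    (lam x = lin <->
      ((forall G, ~ R0 G x) \/
       (forall G, R0 G x -> exists y, G y /\ lam y = lout))) /\
    (lam x = lout <->
      (exists G, R0 G x /\ forall y, G y -> lam y = lin)) /\
    (lam x = lund <->
      ((forall G, R0 G x -> exists y, G y /\ lam y <> lin) /\
       (exists G', R0 G' x /\ forall y, G' y -> (lam y = lin \/ lam y = lund)))).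

(* The labelling is the grounded one.  Call a pair (I, O) of argument sets
   closed if x is in I whenever every attack on x contains a member of O, and
   x is in O whenever some attack on x lies inside I.  The intersection of all
   closed pairs is the least closed pair; by the Knaster-Tarski argument it is
   a fixed point, and its two components are disjoint because removing the
   overlap from each component leaves a closed pair.  Label the first
   component in, the second out and the rest undecided: CG1 and CG2 are the
   fixed-point equations, and CG3 follows from them since there are only
   three labels. *)

From Stdlib Require Import Classical ClassicalDescription.

Section JointAttacks.

Variable S : Type.
Variable R0 : (S -> Prop) -> S -> Prop.

Definition defeated_by (O : S -> Prop) (x : S) : Prop :=
  forall G, R0 G x -> exists y, G y /\ O y.

Definition attacked_from (I : S -> Prop) (x : S) : Prop :=
  exists G, R0 G x /\ forall y, G y -> I y.

Lemma defeated_by_mono (O O' : S -> Prop) x :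
  (forall y, O y -> O' y) -> defeated_by O x -> defeated_by O' x.
Proof.
  intros HOO' Hx G HG.
  destruct (Hx G HG) as [y [Gy Oy]].
  exists y; auto.
Qed.

Lemma attacked_from_mono (I I' : S -> Prop) x :
  (forall y, I y -> I' y) -> attacked_from I x -> attacked_from I' x.
Proof.
  intros HII' [G [HG HGI]].
  exists G; auto.
Qed.

Lemma not_attacked_from (I : S -> Prop) x :
  ~ attacked_from I x -> forall G, R0 G x -> exists y, G y /\ ~ I y.
Proof.
  intros Hnot G HG.
  apply NNPP; intros Hall.
  apply Hnot; exists G; split; [exact HG|].
  intros y Gy; apply NNPP; intros Hy.
  apply Hall; exists y; auto.
Qed.

Lemma not_defeated_by (O : S -> Prop) x :
  ~ defeated_by O x -> exists G, R0 G x /\ forall y, G y -> ~ O y.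
Proof.
  intros Hnot.
  apply NNPP; intros Hall.
  apply Hnot; intros G HG.
  apply NNPP; intros HGO.
  apply Hall; exists G; split; [exact HG|].
  intros y Gy Oy; apply HGO; exists y; auto.
Qed.

Definition closed_pair (I O : S -> Prop) : Prop :=
  (forall x, defeated_by O x -> I x) /\ (forall x, attacked_from I x -> O x).

Definition grounded_in (x : S) : Prop := forall I O, closed_pair I O -> I x.
Definition grounded_out (x : S) : Prop := forall I O, closed_pair I O -> O x.

Lemma closed_pair_grounded : closed_pair grounded_in grounded_out.
Proof.
  split; intros x Hx I O HIO.
  - apply (proj1 HIO).
    apply (defeated_by_mono grounded_out); auto.
    intros y Hy; exact (Hy I O HIO).
  - apply (proj2 HIO).
    apply (attacked_from_mono grounded_in); auto.
    intros y Hy; exact (Hy I O HIO).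
Qed.

Lemma grounded_in_defeated x : grounded_in x -> defeated_by grounded_out x.
Proof.
  intros Hx.
  assert (Hclosed : closed_pair (fun y => grounded_in y /\ defeated_by grounded_out y)
                                grounded_out).
  { split; intros y Hy.
    - split; [apply closed_pair_grounded|]; exact Hy.
    - apply closed_pair_grounded.
      apply (attacked_from_mono (fun z => grounded_in z /\ defeated_by grounded_out z));
        tauto. }
  exact (proj2 (Hx _ _ Hclosed)).
Qed.

Lemma grounded_out_attacked x : grounded_out x -> attacked_from grounded_in x.
Proof.
  intros Hx.
  assert (Hclosed : closed_pair grounded_in
                      (fun y => grounded_out y /\ attacked_from grounded_in y)).
  { split; intros y Hy.
    - apply closed_pair_grounded.
      apply (defeated_by_mono (fun z => grounded_out z /\ attacked_from grounded_in z));
        tauto.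
    - split; [apply closed_pair_grounded|]; exact Hy. }
  exact (proj2 (Hx _ _ Hclosed)).
Qed.

Lemma grounded_in_iff x : grounded_in x <-> defeated_by grounded_out x.
Proof. split; [apply grounded_in_defeated | apply closed_pair_grounded]. Qed.

Lemma grounded_out_iff x : grounded_out x <-> attacked_from grounded_in x.
Proof. split; [apply grounded_out_attacked | apply closed_pair_grounded]. Qed.

Lemma grounded_in_not_out x : grounded_in x -> ~ grounded_out x.
Proof.
  set (I' := fun y => grounded_in y /\ ~ grounded_out y).
  set (O' := fun y => grounded_out y /\ ~ grounded_in y).
  assert (Hclosed : closed_pair I' O').
  { split; intros y Hy.
    - split.
      + apply grounded_in_iff.
        apply (defeated_by_mono O'); [unfold O'; tauto | exact Hy].
      + intros Hout.
        destruct (grounded_out_attacked y Hout) as [G [HG HGin]].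
        destruct (Hy G HG) as [z [Gz [_ Hz]]].
        exact (Hz (HGin z Gz)).
    - destruct Hy as [G [HG HGI']].
      split.
      + apply grounded_out_iff.
        exists G; split; [exact HG|]; intros z Gz; exact (proj1 (HGI' z Gz)).
      + intros Hin.
        destruct (grounded_in_defeated y Hin G HG) as [z [Gz Hz]].
        exact (proj2 (HGI' z Gz) Hz). }
  intros Hin Hout.
  exact (proj2 (Hin I' O' Hclosed) Hout).
Qed.

Definition grounded_labelling (x : S) : label :=
  if excluded_middle_informative (grounded_in x) then lin
  else if excluded_middle_informative (grounded_out x) then lout
  else lund.

Lemma grounded_labelling_lin x : grounded_labelling x = lin <-> grounded_in x.
Proof.
  unfold grounded_labelling.
  destruct (excluded_middle_informative (grounded_in x)) as [Hin|Hin]; [tauto|].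
  destruct (excluded_middle_informative (grounded_out x)); split;
    (discriminate || tauto).
Qed.

Lemma grounded_labelling_lout x : grounded_labelling x = lout <-> grounded_out x.
Proof.
  unfold grounded_labelling.
  destruct (excluded_middle_informative (grounded_in x)) as [Hin|Hin].
  - split; [discriminate|]. intros Hout; contradiction (grounded_in_not_out x Hin).
  - destruct (excluded_middle_informative (grounded_out x)); split;
      (discriminate || tauto).
Qed.

Lemma legitimate_of_fixpoint (lam : S -> label) :
  (forall x, lam x = lin <-> defeated_by (fun y => lam y = lout) x) ->
  (forall x, lam x = lout <-> attacked_from (fun y => lam y = lin) x) ->
  legitimate_CG_labelling S R0 lam.
Proof.
  intros Hlin Hlout x.
  split; [|split; [exact (Hlout x)|]].
  - rewrite Hlin; split; [tauto|].
    intros [Hnone|Hdef]; [|exact Hdef].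
    intros G HG; contradiction (Hnone G HG).
  - split.
    + intros Hund.
      assert (Hnot_out : ~ attacked_from (fun y => lam y = lin) x)
        by (rewrite <- Hlout; congruence).
      assert (Hnot_in : ~ defeated_by (fun y => lam y = lout) x)
        by (rewrite <- Hlin; congruence).
      split; [exact (not_attacked_from _ x Hnot_out)|].
      destruct (not_defeated_by _ x Hnot_in) as [G [HG HGnot_out]].
      exists G; split; [exact HG|].
      intros y Gy; specialize (HGnot_out y Gy).
      destruct (lam y); auto; contradiction.
    + intros [Hnot_all_in [G [HG HGin_und]]].
      destruct (lam x) eqn:Ex; [| |reflexivity].
      * destruct (proj1 (Hlin x) Ex G HG) as [y [Gy Hy]].
        destruct (HGin_und y Gy); congruence.
      * destruct (proj1 (Hlout x) Ex) as [G' [HG' HG'in]].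
        destruct (Hnot_all_in G' HG') as [y [Gy Hy]].
        contradiction (Hy (HG'in y Gy)).
Qed.

Lemma legitimate_grounded_labelling : legitimate_CG_labelling S R0 grounded_labelling.
Proof.
  apply legitimate_of_fixpoint; intros x.
  - rewrite grounded_labelling_lin, grounded_in_iff.
    split; apply defeated_by_mono; intros y; apply grounded_labelling_lout.
  - rewrite grounded_labelling_lout, grounded_out_iff.
    split; apply attacked_from_mono; intros y; apply grounded_labelling_lin.
Qed.

End JointAttacks.

Theorem theorem21 (S : Type) (R0 : (S -> Prop) -> S -> Prop)
  (HA : joint_attack_network S R0) :
  exists lam : S -> label, legitimate_CG_labelling S R0 lam.
Proof.
  exists (grounded_labelling S R0).
  apply legitimate_grounded_labelling.
Qed.
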